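(* Assume $\kappa=(\kappa_1,\dots,\kappa_n)\in\Gamma_k$ with $\kappa_1\ge\kappa_2\ge\dots\ge\kappa_n$. Then for any $0\le s\le k\le n$, $$\frac{\kappa_1^s\,\sigma_{k-s}(\kappa)}{\sigma_k(\kappa)}\ge\frac{C_n^{k-s}}{C_n^k},$$ where $C_n^m=\frac{n!}{m!(n-m)!}$.
   Context: $\sigma_m(\kappa)$ denotes the $m$-th elementary symmetric function of $\kappa\in\mathbb{R}^n$, with $\sigma_0=1$. $\Gamma_k=\{\kappa\in\mathbb{R}^n:\sigma_m(\kappa)>0,\ m=1,\dots,k\}$ (Gårding cone), $k\ge1$. *)

From mathcomp Require Import all_boot all_order all_algebra.
Set Implicit Arguments. Unset Strict Implicit. Unset Printing Implicit Defensive.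
Import Order.TTheory GRing.Theory Num.Theory.
Local Open Scope ring_scope.

Definition esymf (R : comPzRingType) (n m : nat) (kappa : 'I_n -> R) : R :=
  \sum_(A : {set 'I_n} | #|A| == m) \prod_(i in A) kappa i.

Definition garding (R : realFieldType) (n k : nat) (kappa : 'I_n -> R) : Prop :=
  forall m : nat, (1 <= m)%N -> (m <= k)%N -> 0 < esymf m kappa.

From mathcomp Require Import all_boot all_order all_algebra.
From mathcomp Require Import ring lra zify.
Set Implicit Arguments. Unset Strict Implicit. Unset Printing Implicit Defensive.
Import Order.TTheory GRing.Theory Num.Theory.
Local Open Scope ring_scope.

(* Write σ_j(κ|i) for the elementary symmetric functions of κ with κ_i
   deleted.  Then j σ_j = Σ_i κ_i σ_{j-1}(κ|i) and Σ_i σ_{j-1}(κ|i) =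
   (n - j + 1) σ_{j-1}.  For κ ∈ Γ_k every κ|i lies in Γ_{k-1}, so for j ≤ k
   the weights σ_{j-1}(κ|i) are nonnegative and κ_i ≤ κ_1 gives
   j σ_j ≤ (n - j + 1) κ_1 σ_{j-1}, i.e. σ_j / C_n^j ≤ κ_1 σ_{j-1} / C_n^{j-1};
   iterating s times yields the claim.  That κ|i ∈ Γ_{k-1} is proved by
   induction on n, simultaneously with the Newton-type inequality
   σ_{m-1} σ_{m+1} ≤ σ_m^2 on Γ_m: a nonpositive entry can always be deleted
   without leaving Γ_k, and deleting a positive entry z changes
   σ_j = σ_j(κ|z) + z σ_{j-1}(κ|z) in a way Newton's inequality controls. *)

Section SeqElementarySymmetric.
Variable R : comNzRingType.
Implicit Types (l : seq R) (x y : R).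

Definition esyms l (m : nat) : R := (\prod_(x <- l) (x *: 'X + 1))`_m.

Lemma esyms_nil m : esyms [::] m = (m == 0)%:R.
Proof. by rewrite /esyms big_nil coef1. Qed.

Lemma esyms0 l : esyms l 0 = 1.
Proof.
elim: l => [|x l IHl]; first by rewrite esyms_nil.
by rewrite /esyms big_cons mulrDl mul1r coefD -scalerAl coefZ coefXM /= mulr0 add0r.
Qed.

Lemma esyms_consS x l m : esyms (x :: l) m.+1 = esyms l m.+1 + x * esyms l m.
Proof.
by rewrite /esyms big_cons mulrDl mul1r coefD -scalerAl coefZ coefXM /= addrC.
Qed.

Lemma perm_esyms l1 l2 m : perm_eq l1 l2 -> esyms l1 m = esyms l2 m.
Proof. by move=> l12; rewrite /esyms (perm_big _ l12). Qed.

Lemma esyms_eq0 l m : (size l < m)%N -> esyms l m = 0.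
Proof.
elim: l m => [|x l IHl] [|m] //=; first by rewrite esyms_nil.
by rewrite ltnS => lt_lm; rewrite esyms_consS !IHl ?mulr0 ?addr0 // ltnW.
Qed.

Lemma esyms_rem x l m : x \in l ->
  esyms l m.+1 = esyms (rem x l) m.+1 + x * esyms (rem x l) m.
Proof. by move=> x_l; rewrite (perm_esyms _ (perm_to_rem x_l)) esyms_consS. Qed.

Lemma sum_mul_esyms_rem l m :
  \sum_(x <- l) x * esyms (rem x l) m = m.+1%:R * esyms l m.+1.
Proof.
elim: l m => [|y l IHl] m; first by rewrite big_nil esyms_nil mulr0.
have rem_cons x : x \in l -> perm_eq (rem x (y :: l)) (y :: rem x l).
  by move=> x_l /=; case: eqP => [->|_]; [exact: perm_to_rem | exact: perm_refl].
rewrite big_cons /= eqxx big_seq.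
under eq_bigr => x x_l do rewrite (perm_esyms _ (rem_cons x x_l)).
rewrite -big_seq esyms_consS; case: m => [|m].
  have sum_l : \sum_(x <- l) x = esyms l 1.
    by rewrite -[RHS]mul1r -(IHl 0%N); apply: eq_bigr => x _; rewrite esyms0 mulr1.
  under eq_bigr do rewrite esyms0 mulr1.
  by rewrite sum_l esyms0; ring.
under eq_bigr do rewrite esyms_consS mulrDr mulrCA.
by rewrite big_split -mulr_sumr /= !IHl -[m.+2]addn1 -[m.+1]addn1 !natrD; ring.
Qed.

Lemma sum_esyms_rem l m :
  \sum_(x <- l) esyms (rem x l) m = ((size l)%:R - m%:R) * esyms l m.
Proof.
case: m => [|m].
  under eq_bigr do rewrite esyms0.
  by rewrite big_const_seq count_predT iter_addr_0 esyms0 subr0 mulr1.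
have esyms_remS x : x \in l ->
    esyms (rem x l) m.+1 = esyms l m.+1 - x * esyms (rem x l) m.
  by move=> x_l; rewrite (esyms_rem m x_l) addrK.
rewrite big_seq; under eq_bigr => x x_l do rewrite esyms_remS //.
rewrite -big_seq sumrB sum_mul_esyms_rem big_const_seq count_predT iter_addr_0.
by rewrite -mulr_natl; ring.
Qed.

Lemma esymf_esyms n m (kappa : 'I_n -> R) :
  esymf m kappa = esyms (map kappa (enum 'I_n)) m.
Proof.
rewrite /esyms big_map big_enum /= bigA_distr coef_sum /esymf big_mkcond /=.
apply: eq_bigr => A _; rewrite -big_mkcond /= scaler_prod prodr_const.
by rewrite coefZ coefXn eq_sym; case: eqP; rewrite ?mulr1 ?mulr0.
Qed.

End SeqElementarySymmetric.

Section GardingCone.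
Variable R : realFieldType.
Implicit Types (l : seq R) (x y z a : R).

Definition garding_seq k l := forall m, (1 <= m <= k)%N -> 0 < esyms l m.

Lemma garding_seq_esyms_gt0 k l m : garding_seq k l -> (m <= k)%N -> 0 < esyms l m.
Proof. by case: m => [|m] hG le_mk; rewrite ?esyms0 // hG. Qed.

Lemma garding_seq_le k k' l : (k' <= k)%N -> garding_seq k l -> garding_seq k' l.
Proof. by move=> le_k'k hG m /andP[m_gt0 le_mk']; rewrite hG // m_gt0 (leq_trans le_mk'). Qed.

Lemma perm_garding_seq k l1 l2 : perm_eq l1 l2 -> garding_seq k l1 -> garding_seq k l2.
Proof. by move=> l12 hG m hm; rewrite -(perm_esyms _ l12) hG. Qed.

Lemma garding_seq_size k l : garding_seq k l -> (k <= size l)%N.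
Proof.
case: k => // k hG; rewrite leqNgt; apply/negP => lt_lk.
by have := hG k.+1 (leqnn _); rewrite esyms_eq0 // ltxx.
Qed.

Lemma esyms_gt0 l m : (forall x, x \in l -> 0 < x) -> (m <= size l)%N -> 0 < esyms l m.
Proof.
elim: l m => [|y l IHl] [|m] l_gt0 //= le_ml; rewrite ?esyms0 //.
have y_gt0 : 0 < y by rewrite l_gt0 ?mem_head.
have {}l_gt0 x : x \in l -> 0 < x by move=> x_l; rewrite l_gt0 // in_cons x_l orbT.
rewrite esyms_consS; case: (ltnP m (size l)) => [lt_ml | le_lm].
  by rewrite ltr_wpDr ?mulr_ge0 ?ltW ?IHl // ltnW.
by rewrite esyms_eq0 ?add0r ?mulr_gt0 ?IHl.
Qed.

Lemma esyms1_gt0_exists l : 0 < esyms l 1 -> exists2 x, x \in l & 0 < x.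
Proof.
elim: l => [|y l IHl]; first by rewrite esyms_nil ltxx.
rewrite esyms_consS esyms0 mulr1; case: (ltrP 0 y) => [y_gt0 _ | y_le0 hl].
  by exists y; rewrite ?mem_head.
have [|x x_l x_gt0] := IHl; first by apply: lt_le_trans hl _; rewrite gerDl.
by exists x; rewrite // in_cons x_l orbT.
Qed.

Lemma garding_seq_cons_nonpos x l k : x <= 0 -> garding_seq k (x :: l) -> garding_seq k l.
Proof.
move=> x_le0 hG; suff l_gt0 m : (m <= k)%N -> 0 < esyms l m.
  by move=> m /andP[_ /l_gt0].
elim: m => [|m IHm] le_mk; first by rewrite esyms0.
have := hG m.+1 le_mk; rewrite esyms_consS.
have := IHm (ltnW le_mk); nra.
Qed.

Lemma newton_cons e0 e1 e2 e3 z : 0 <= e0 -> 0 < e1 -> 0 < e2 -> 0 <= z ->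
  e0 * e2 <= e1 ^+ 2 -> e1 * e3 <= e2 ^+ 2 ->
  (e1 + z * e0) * (e3 + z * e2) <= (e2 + z * e1) ^+ 2.
Proof.
move=> e0_ge0 e1_gt0 e2_gt0 z_ge0 newton012 newton123.
have cross : e0 * e3 <= e1 * e2.
  case: (lerP e3 0) => [e3_le0 | e3_gt0]; first by nra.
  have : (e0 * e2) * (e1 * e3) <= e1 ^+ 2 * e2 ^+ 2.
    by apply: ler_pM; rewrite // mulr_ge0 // ltW.
  by nra.
by nra.
Qed.

Definition newton_upto n := forall l m, (size l <= n)%N ->
  garding_seq m.+1 l -> esyms l m * esyms l m.+2 <= esyms l m.+1 ^+ 2.

Definition behead_upto n := forall z l k, (size l < n)%N ->
  garding_seq k (z :: l) -> garding_seq k.-1 l.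

Lemma behead_uptoS n : newton_upto n -> behead_upto n -> behead_upto n.+1.
Proof.
move=> newton behead z mu k size_mu hG t /andP[t_gt0 le_tk].
have [z_le0 | z_gt0] := lerP z 0.
  by apply: (garding_seq_cons_nonpos z_le0 hG); lia.
have [/allP mu_gt0 | /allPn[x x_mu]] := boolP (all (fun x => 0 < x) mu).
  by apply: esyms_gt0 mu_gt0 _; have := garding_seq_size hG; rewrite /=; lia.
rewrite -leNgt => x_le0; set nu := rem x mu.
have mu_nu : perm_eq mu (x :: nu) := perm_to_rem x_mu.
have zmu_zxnu : perm_eq (z :: mu) (z :: x :: nu) by rewrite perm_cons.
have size_nu : (size nu < n)%N by move: size_mu; rewrite (perm_size mu_nu).
have hGnu : garding_seq k.-1 nu.
  apply: (behead z nu k size_nu); apply: garding_seq_cons_nonpos x_le0 _.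
  apply: perm_garding_seq hG; apply: perm_trans zmu_zxnu _.
  by move: (perm_catCA [:: z] [:: x] nu (x :: z :: nu)); rewrite /= perm_refl.
case: t t_gt0 le_tk => // t _ le_tk.
(* Since x ≤ 0, a sign change σ_{t+1}(x::nu) ≤ 0 < σ_{t+2}(x::nu) would force
   σ_t σ_{t+2} > σ_{t+1}^2 for nu, against Newton's inequality. *)
rewrite (perm_esyms _ mu_nu) esyms_consS ltNge; apply/negP => esyms_le0.
have e0_gt0 := garding_seq_esyms_gt0 hGnu (ltnW le_tk).
have e1_gt0 := garding_seq_esyms_gt0 hGnu le_tk.
have newton_nu := newton nu t (ltnW size_nu) (garding_seq_le le_tk hGnu).
have e2_gt0 : 0 < esyms nu t.+2 + x * esyms nu t.+1.
  have /hG : (1 <= t.+2 <= k)%N by lia.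
  by rewrite (perm_esyms _ zmu_zxnu) !esyms_consS; nra.
by nra.
Qed.

Lemma newton_uptoS n : newton_upto n -> behead_upto n.+1 -> newton_upto n.+1.
Proof.
move=> newton behead l m size_l hG.
have em_gt0 := garding_seq_esyms_gt0 hG (leqnSn m).
have [em2_le0 | em2_gt0] := lerP (esyms l m.+2) 0.
  by apply: le_trans (sqr_ge0 _); rewrite pmulr_rle0.
have hG2 : garding_seq m.+2 l.
  by move=> t /andP[t_gt0]; rewrite leq_eqVlt ltnS => /orP[/eqP -> // | ?]; rewrite hG ?t_gt0.
have [z z_l z_gt0] := esyms1_gt0_exists (hG 1%N isT).
set mu := rem z l; have l_mu : perm_eq l (z :: mu) := perm_to_rem z_l.
have size_mu : (size mu <= n)%N by move: size_l; rewrite (perm_size l_mu).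
have hGmu : garding_seq m.+1 mu := behead z mu m.+2 size_mu (perm_garding_seq l_mu hG2).
have newton_mu := newton mu _ size_mu.
rewrite !(perm_esyms _ l_mu) !esyms_consS.
case: m {em_gt0 em2_gt0 hG hG2} hGmu => [|m] hGmu.
  have e1_gt0 := garding_seq_esyms_gt0 hGmu (leqnn 1).
  by have := newton_mu 0%N hGmu; rewrite !esyms0; nra.
have e_gt0 j : (j <= m.+2)%N -> 0 < esyms mu j := garding_seq_esyms_gt0 hGmu.
rewrite esyms_consS; apply: newton_cons.
- by apply/ltW/e_gt0; rewrite !leqW.
- exact/e_gt0/leqW.
- exact: e_gt0.
- exact: ltW.
- exact: newton_mu m (garding_seq_le (leqnSn _) hGmu).
- exact: newton_mu m.+1 hGmu.
Qed.

Lemma newton_behead_upto n : newton_upto n /\ behead_upto n.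
Proof.
elim: n => [|n [newton behead]].
  split=> // l m; rewrite leqn0 => /nilP -> /(_ 1%N isT).
  by rewrite esyms_nil ltxx.
have behead' := behead_uptoS newton behead.
by split=> //; apply: newton_uptoS.
Qed.

Lemma garding_seq_behead z l k : garding_seq k (z :: l) -> garding_seq k.-1 l.
Proof. exact: (newton_behead_upto (size l).+1).2 z l k (ltnSn _). Qed.

Lemma garding_seq_rem x l k : x \in l -> garding_seq k l -> garding_seq k.-1 (rem x l).
Proof. by move=> x_l /(perm_garding_seq (perm_to_rem x_l)) /garding_seq_behead. Qed.

Lemma esyms_succ_le l a m : (forall x, x \in l -> x <= a) ->
    (forall x, x \in l -> 0 <= esyms (rem x l) m) ->
  m.+1%:R * esyms l m.+1 <= a * ((size l)%:R - m%:R) * esyms l m.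
Proof.
move=> le_a rem_ge0.
rewrite -sum_mul_esyms_rem -mulrA -sum_esyms_rem mulr_sumr !big_seq.
by apply: ler_sum => x x_l; apply: ler_wpM2r; [exact: rem_ge0 | exact: le_a].
Qed.

Definition esyms_mean l m := esyms l m / 'C(size l, m)%:R.

Lemma garding_seq_esyms_meanS_le k l a m : garding_seq k l ->
    (forall x, x \in l -> x <= a) -> (m < k)%N ->
  esyms_mean l m.+1 <= a * esyms_mean l m.
Proof.
move=> hG le_a lt_mk; set n := size l.
have lt_mn : (m < n)%N := leq_trans lt_mk (garding_seq_size hG).
have step : m.+1%:R * esyms l m.+1 <= a * (n%:R - m%:R) * esyms l m.
  apply: esyms_succ_le le_a _ => x x_l.
  by apply/ltW/(garding_seq_esyms_gt0 (garding_seq_rem x_l hG)); lia.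
have binom : m.+1%:R * 'C(n, m.+1)%:R = (n%:R - m%:R) * 'C(n, m)%:R :> R.
  by rewrite -natrB ?(ltnW lt_mn) // -!natrM mul_bin_left.
have Cm_gt0 : 0 < 'C(n, m)%:R :> R by rewrite ltr0n bin_gt0 ltnW.
have CmS_gt0 : 0 < 'C(n, m.+1)%:R :> R by rewrite ltr0n bin_gt0.
rewrite /esyms_mean -/n ler_pdivrMr // -(ler_pM2l (ltr0Sn _ m)).
suff -> : m.+1%:R * (a * (esyms l m / 'C(n, m)%:R) * 'C(n, m.+1)%:R) =
  a * (n%:R - m%:R) * esyms l m by [].
by rewrite mulrCA -mulrA binom; field; rewrite gt_eqF.
Qed.

End GardingCone.

Lemma ler_ratio_chain (R : numDomainType) (q : nat -> R) (a : R) (k s : nat) : 0 <= a ->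
    (forall m, (m < k)%N -> q m.+1 <= a * q m) -> (s <= k)%N ->
  q k <= a ^+ s * q (k - s)%N.
Proof.
move=> a_ge0 q_le; elim: s => [|s IHs] lt_sk; first by rewrite subn0 expr0 mul1r.
apply: le_trans (IHs (ltnW lt_sk)) _.
have -> : (k - s = (k - s.+1).+1)%N by lia.
by rewrite exprSr -mulrA ler_wpM2l ?exprn_ge0 ?q_le //; lia.
Qed.

Theorem lemma2p3 (R : realFieldType) (n k s : nat) (kappa : 'I_n -> R) (i1 : 'I_n) :
  nat_of_ord i1 = 0%N ->
  (1 <= k)%N -> garding k kappa ->
  (forall i j : 'I_n, (i <= j)%N -> kappa j <= kappa i) ->
  (s <= k)%N -> (k <= n)%N ->
  (binomial n (k - s))%:R / (binomial n k)%:R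
    <= kappa i1 ^+ s * esymf (k - s)%N kappa / esymf k kappa.
Proof.
move=> i1_0 k_gt0 kappa_garding kappa_dec le_sk le_kn.
set l := map kappa (enum 'I_n).
have size_l : size l = n by rewrite size_map size_enum_ord.
have hG : garding_seq k l by move=> m /andP[m_gt0 le_mk]; rewrite -esymf_esyms kappa_garding.
have le_a x : x \in l -> x <= kappa i1.
  by case/mapP=> i _ ->; apply: kappa_dec; rewrite i1_0.
have a_gt0 : 0 < kappa i1.
  have [x x_l x_gt0] := esyms1_gt0_exists (hG 1%N k_gt0).
  exact: lt_le_trans x_gt0 (le_a x x_l).
have := ler_ratio_chain (ltW a_gt0) (fun m => garding_seq_esyms_meanS_le hG le_a) le_sk.
have ek_gt0 : 0 < esyms l k := garding_seq_esyms_gt0 hG (leqnn k).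
have binom_gt0 j : (j <= n)%N -> 0 < 'C(n, j)%:R :> R by rewrite ltr0n bin_gt0.
have Ck_gt0 := binom_gt0 k le_kn.
have Cks_gt0 := binom_gt0 (k - s)%N (leq_trans (leq_subr s k) le_kn).
rewrite /esyms_mean size_l !esymf_esyms -/l ler_pdivrMr // => chain.
rewrite ler_pdivrMr // mulrAC ler_pdivlMr //.
apply: le_trans (ler_wpM2l (ltW Cks_gt0) chain) _.
by rewrite le_eqVlt; apply/orP; left; apply/eqP; field; rewrite !gt_eqF.
Qed.
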